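(* Let $d\ge1$, $n\ge3$, $u\in\mathbb{C}\setminus\{0\}$. The two-sided ideal of $\mathrm{Y}_{d,n}(u)$ generated by $r_{1,2},\ldots,r_{n-2,n-1}$ (the defining ideal of $\mathrm{FTL}_{d,n}(u)$) is generated by any single element $r_{i,i+1}$, $1\le i\le n-2$.
   Context: The Yokonuma–Hecke algebra $\mathrm{Y}_{d,n}(u)$ is the unital associative $\mathbb{C}$-algebra with generators $g_1,\ldots,g_{n-1},t_1,\ldots,t_n$ and relations: $g_ig_j=g_jg_i$ for $|i-j|>1$; $g_{i+1}g_ig_{i+1}=g_ig_{i+1}g_i$; $t_it_j=t_jt_i$; $t_i^d=1$; $g_it_i=t_{i+1}g_i$; $g_it_{i+1}=t_ig_i$; $g_it_j=t_jg_i$ for $j\ne i,i+1$; $g_i^2=1+(u-1)e_i+(u-1)e_ig_i$, where $e_i=\frac1d\sum_{s=0}^{d-1}t_i^st_{i+1}^{d-s}$. For $w\in S_n$ with reduced expression $s_{i_1}\cdots s_{i_k}$ put $g_w=g_{i_1}\cdots g_{i_k}$; $g_{i,i+1}=\sum_{w\in\langle s_i,s_{i+1}\rangle}g_w$ and $r_{i,i+1}=\sum_{a,b=0}^{d-1}t_i^{a}t_{i+1}^{b-a}t_{i+2}^{-b}\,g_{i,i+1}$. $\mathrm{FTL}_{d,n}(u)$ is the quotient of $\mathrm{Y}_{d,n}(u)$ by the two-sided ideal generated by all $r_{i,i+1}$. *)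

From HB Require Import structures.
From mathcomp Require Import all_boot all_order all_algebra.
From mathcomp Require Import complex.
From mathcomp Require Import Rstruct.
Set Implicit Arguments. Unset Strict Implicit. Unset Printing Implicit Defensive.
Import Order.TTheory GRing.Theory Num.Theory.
Local Open Scope ring_scope.

Definition CC : Type := (complex Rdefinitions.R).
Definition CC_fieldType : fieldType := CC.

Definition in_ideal (A : pzRingType) (S : seq A) (x : A) : Prop :=
  exists (k : nat) (a b s : nat -> A),
    (forall m, (m < k)%N -> s m \in S) /\
    x = \sum_(m < k) a m * s m * b m.

Section YH.
Variables (A : algType CC_fieldType) (d n : nat) (u : CC_fieldType)
          (g t : nat -> A).

Definition YH_e (i : nat) : A :=
  (d%:R)^-1 *: \sum_(s < d) (t i ^+ s * t i.+1 ^+ (d - s)).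

(* Defining relations of Y_{d,n}(u), generators g_1..g_{n-1}, t_1..t_n (1-based). *)
Definition YH_relations : Prop :=
  (forall i j, (1 <= i <= n.-1)%N -> (1 <= j <= n.-1)%N ->
         (i.+1 < j)%N || (j.+1 < i)%N -> g i * g j = g j * g i) /\
      (forall i, (1 <= i)%N -> (i.+1 <= n.-1)%N ->
         g i.+1 * g i * g i.+1 = g i * g i.+1 * g i) /\
      (forall i j, (1 <= i <= n)%N -> (1 <= j <= n)%N -> t i * t j = t j * t i) /\
      (forall i, (1 <= i <= n)%N -> t i ^+ d = 1) /\
      (forall i, (1 <= i <= n.-1)%N -> g i * t i = t i.+1 * g i) /\
      (forall i, (1 <= i <= n.-1)%N -> g i * t i.+1 = t i * g i) /\
      (forall i j, (1 <= i <= n.-1)%N -> (1 <= j <= n)%N -> j != i -> j != i.+1 ->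
         g i * t j = t j * g i) /\
      (forall i, (1 <= i <= n.-1)%N ->
         g i ^+ 2 = 1 + (u - 1) *: YH_e i + (u - 1) *: (YH_e i * g i)).

(* g_{i,i+1} = sum over w in <s_i, s_{i+1}> (6 elements) of g_w. *)
Definition YH_gpar (i : nat) : A :=
  1 + g i + g i.+1 + g i * g i.+1 + g i.+1 * g i + g i * g i.+1 * g i.

(* Integer powers of t_j (t_j^d = 1): t_j^z is represented by t_j^(z mod d). *)
Definition YH_tpow (j : nat) (z : int) : A := t j ^+ `|(z %% d%:Z)%Z|%N.

Definition YH_r (i : nat) : A :=
  \sum_(a < d) \sum_(b < d)
     (YH_tpow i a%:Z * YH_tpow i.+1 (b%:Z - a%:Z) * YH_tpow i.+2 (- b%:Z) * YH_gpar i).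

End YH.

(* Conjugation by delta_j = g_j g_(j+1) g_(j+2) sends g_j to g_(j+1), g_(j+1) to
   g_(j+2) and t_m to t_(m+1) for j <= m <= j+2, hence r_(j,j+1) to r_(j+1,j+2).
   Each g_k is invertible, with inverse g_k + (u^-1 - 1)(e_k + e_k g_k): this
   uses that e_k is an idempotent commuting with g_k, which holds because
   d e_k is the sum of the powers of t_k t_(k+1)^-1, a d-th root of unity that
   g_k sends to its inverse. So delta_j is a unit, the elements r_(j,j+1) and
   r_(j+1,j+2) generate the same two-sided ideal, and by chaining all the
   r_(j,j+1) generate the same ideal. *)
From mathcomp Require Import all_boot all_order all_algebra.
From mathcomp Require Import complex Rstruct.
From mathcomp Require Import zify.
Set Implicit Arguments.
Unset Strict Implicit.
Import GRing.Theory Num.Theory.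
Local Open Scope ring_scope.

Section IdealFacts.
Variable R : pzRingType.
Implicit Types (S T : seq R) (x y z : R).

Lemma in_ideal_mem S x : x \in S -> in_ideal S x.
Proof.
move=> Sx; exists 1%N, (fun=> 1), (fun=> 1), (fun=> x); split=> //.
by rewrite big_ord1 mul1r mulr1.
Qed.

Lemma in_ideal0 S : in_ideal S 0.
Proof. by exists 0%N, (fun=> 0), (fun=> 0), (fun=> 0); rewrite big_ord0. Qed.

Lemma in_idealD S x y : in_ideal S x -> in_ideal S y -> in_ideal S (x + y).
Proof.
move=> [k1 [a1 [b1 [s1 [S1 ->]]]]] [k2 [a2 [b2 [s2 [S2 ->]]]]].
pose glue (f1 f2 : nat -> R) m := if (m < k1)%N then f1 m else f2 (m - k1)%N.
exists (k1 + k2)%N, (glue a1 a2), (glue b1 b2), (glue s1 s2); split.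
  by move=> m lt_m; rewrite /glue; case: ifP => lt_mk; [apply: S1 | apply: S2; lia].
rewrite big_split_ord /glue; congr (_ + _); apply: eq_bigr => m _ /=.
  by rewrite ltn_ord.
by rewrite ltnNge leq_addr /= addKn.
Qed.

Lemma in_idealMlr S a x b : in_ideal S x -> in_ideal S (a * x * b).
Proof.
move=> [k [a1 [b1 [s1 [S1 ->]]]]].
exists k, (fun m => a * a1 m), (fun m => b1 m * b), s1; split=> //.
by rewrite mulr_sumr mulr_suml; apply: eq_bigr => m _; rewrite !mulrA.
Qed.

Lemma in_ideal_trans S T x :
  (forall s, s \in S -> in_ideal T s) -> in_ideal S x -> in_ideal T x.
Proof.
move=> ST [k [a [b [s [Ss ->]]]]].
elim: k Ss => [|k IHk] Ss; first by rewrite big_ord0; apply: in_ideal0.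
rewrite big_ord_recr /=; apply: in_idealD; first by apply: IHk => m lt_mk; apply: Ss; lia.
by apply/in_idealMlr/ST/Ss.
Qed.

Lemma in_ideal1_trans x y z :
  in_ideal [:: x] y -> in_ideal [:: y] z -> in_ideal [:: x] z.
Proof. by move=> xy; apply: in_ideal_trans => s; rewrite inE => /eqP ->. Qed.

End IdealFacts.

Section Intertwining.
Variable R : pzRingType.
Implicit Types (D x y : R).

Definition intertwines D x y := D * x = y * D.

Lemma intertwines1 D : intertwines D 1 1.
Proof. by rewrite /intertwines mul1r mulr1. Qed.

Lemma intertwinesD D x x' y y' :
  intertwines D x x' -> intertwines D y y' -> intertwines D (x + y) (x' + y').
Proof. by rewrite /intertwines mulrDr mulrDl => -> ->. Qed.

Lemma intertwinesM D x x' y y' :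
  intertwines D x x' -> intertwines D y y' -> intertwines D (x * y) (x' * y').
Proof. by rewrite /intertwines => Dx Dy; rewrite mulrA Dx -mulrA Dy mulrA. Qed.

Lemma intertwinesX D x x' m : intertwines D x x' -> intertwines D (x ^+ m) (x' ^+ m).
Proof.
move=> Dx; elim: m => [|m IHm]; first exact: intertwines1.
by rewrite !exprS; apply: intertwinesM.
Qed.

Lemma intertwines_sum D k (F F' : 'I_k -> R) :
  (forall i, intertwines D (F i) (F' i)) ->
  intertwines D (\sum_(i < k) F i) (\sum_(i < k) F' i).
Proof.
by move=> DF; rewrite /intertwines mulr_sumr mulr_suml; apply: eq_bigr => i _; apply: DF.
Qed.

Lemma intertwines_comp D1 D2 x y z :
  intertwines D2 x y -> intertwines D1 y z -> intertwines (D1 * D2) x z.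
Proof. by rewrite /intertwines => D2x D1y; rewrite -mulrA D2x mulrA D1y mulrA. Qed.

End Intertwining.

Lemma mulrnI_lmod (F : fieldType) (V : lmodType F) n :
  n%:R != 0 :> F -> injective (fun v : V => v *+ n).
Proof.
move=> n_neq0 x y /= xy.
by rewrite -[x]scale1r -[y]scale1r -(mulVf n_neq0) -!scalerA !scaler_nat xy.
Qed.

Section CyclicSums.
Variables (R : pzRingType) (d : nat).
Implicit Types x y : R.

Lemma mulr_sum_expr_root x : x ^+ d = 1 ->
  x * \sum_(s < d) x ^+ s = \sum_(s < d) x ^+ s.
Proof.
case: d => [|d'] xd; first by rewrite !big_ord0 mulr0.
rewrite mulr_sumr big_ord_recr big_ord_recl /= -exprS xd addrC.
by congr (_ + _); apply: eq_bigr => i _; rewrite -exprS.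
Qed.

Lemma mulr_sum_expr_fix x y : x * y = y -> (\sum_(s < d) x ^+ s) * y = y *+ d.
Proof.
move=> xy; rewrite mulr_suml (eq_bigr (fun=> y)) ?sumr_const ?card_ord // => s _.
by elim: (nat_of_ord s) => [|m IHm]; rewrite ?mul1r // exprS -mulrA IHm.
Qed.

End CyclicSums.

(* For commuting a, b with a^d = b^d = 1, the element a * b^(d-1) plays the
   role of a b^-1. *)
Section RootRatio.
Variables (R : pzRingType) (d : nat) (a b : R).
Hypotheses (d_gt0 : (0 < d)%N) (ab : GRing.comm a b)
  (ad : a ^+ d = 1) (bd : b ^+ d = 1).

Lemma commrXX i j : GRing.comm (a ^+ i) (b ^+ j).
Proof. exact/commrX/commr_sym/commrX/commr_sym. Qed.

Lemma ratio_expr s : (s < d)%N -> a ^+ s * b ^+ (d - s) = (a * b ^+ d.-1) ^+ s.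
Proof.
move=> lt_sd; rewrite exprMn_comm; last exact/commrX.
rewrite -exprM; congr (_ * _); case: s lt_sd => [|s] lt_sd.
  by rewrite subn0 muln0 bd.
have -> : (d.-1 * s.+1 = (d - s.+1) + d * s)%N by rewrite -subn1; nia.
by rewrite exprD exprM bd expr1n mulr1.
Qed.

Lemma ratio_exprd : (a * b ^+ d.-1) ^+ d = 1.
Proof.
rewrite exprMn_comm; last exact/commrX.
by rewrite ad mul1r -exprM mulnC exprM bd expr1n.
Qed.

Lemma ratio_mul_inv : a * b ^+ d.-1 * (b * a ^+ d.-1) = 1.
Proof.
rewrite -mulrA (mulrA (b ^+ d.-1)) -exprSr -(commrXX d.-1) mulrA -exprS.
by rewrite prednK // ad bd mul1r.
Qed.

End RootRatio.

Definition eproj (F : fieldType) (A : algType F) (d : nat) (a b : A) : A :=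
  (d%:R)^-1 *: \sum_(s < d) (a ^+ s * b ^+ (d - s)).

Section Idempotent.
Variables (F : fieldType) (A : algType F) (d : nat) (a b g : A).
Hypotheses (d_neq0 : d%:R != 0 :> F) (ab : GRing.comm a b)
  (ad : a ^+ d = 1) (bd : b ^+ d = 1) (ga : g * a = b * g) (gb : g * b = a * g).

Local Notation w := (a * b ^+ d.-1).
Local Notation w' := (b * a ^+ d.-1).
Local Notation E := (\sum_(s < d) w ^+ s).
Local Notation E' := (\sum_(s < d) w' ^+ s).

Let d_gt0 : (0 < d)%N.
Proof. by rewrite lt0n; apply: contraNneq d_neq0 => ->. Qed.

Let ba : GRing.comm b a. Proof. exact: commr_sym. Qed.

Lemma eprojE : eproj d a b = (d%:R)^-1 *: E.
Proof. by congr (_ *: _); apply: eq_bigr => s _; apply: ratio_expr. Qed.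

(* Both E and E' absorb w and w', so E E' = d E' and E' E = d E. *)
Lemma sum_ratio_sym : E = E'.
Proof.
have wE' : w * E' = E'.
  by rewrite -{1}(mulr_sum_expr_root (ratio_exprd ba bd ad)) mulrA ratio_mul_inv // mul1r.
have w'E : w' * E = E.
  by rewrite -{1}(mulr_sum_expr_root (ratio_exprd ab ad bd)) mulrA ratio_mul_inv // mul1r.
have EE' : GRing.comm E E'.
  apply: commr_sum => j _; apply/commr_sym/commr_sum => i _; apply/commrX/commr_sym/commrX.
  by rewrite /GRing.comm !ratio_mul_inv.
apply: (mulrnI_lmod d_neq0) => /=.
by rewrite -(mulr_sum_expr_fix _ w'E) -(mulr_sum_expr_fix _ wE') EE'.
Qed.

Lemma eproj_idem : eproj d a b * eproj d a b = eproj d a b.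
Proof.
rewrite eprojE -scalerAl -scalerAr scalerA mulr_sum_expr_fix; last first.
  exact/mulr_sum_expr_root/ratio_exprd.
by rewrite -scaler_nat scalerA -mulrA mulVf ?mulr1.
Qed.

Lemma eproj_comm : GRing.comm (eproj d a b) g.
Proof.
have gbX k : g * b ^+ k = a ^+ k * g.
  by elim: k => [|k IHk]; rewrite ?mulr1 ?mul1r // exprS mulrA gb -mulrA IHk mulrA -exprS.
have gw : g * w = w' * g by rewrite mulrA ga -mulrA gbX mulrA.
have gwX s : g * w ^+ s = w' ^+ s * g.
  by elim: s => [|s IHs]; rewrite ?mulr1 ?mul1r // !exprS mulrA gw -mulrA IHs mulrA.
rewrite /GRing.comm eprojE -scalerAl -scalerAr; congr (_ *: _).
by rewrite {1}sum_ratio_sym mulr_suml mulr_sumr; apply: eq_bigr => s _.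
Qed.

End Idempotent.

Section QuadraticInverse.
Variables (F : fieldType) (A : algType F) (u : F) (e x : A).
Hypotheses (u_neq0 : u != 0) (ee : e * e = e) (ex : GRing.comm e x)
  (x2 : x ^+ 2 = 1 + (u - 1) *: e + (u - 1) *: (e * x)).

Definition quad_inv := x + (u^-1 - 1) *: (e + e * x).

Let quad_inv_key : x * x + (u^-1 - 1) *: (e * x + e * (x * x)) = 1.
Proof.
set Q := e + e * x.
have eQ : e * Q = Q by rewrite mulrDr mulrA ee.
have xx : x * x = 1 + (u - 1) *: Q by rewrite -expr2 x2 scalerDr addrA.
have eQx : e * x + e * (x * x) = u *: Q.
  rewrite xx mulrDr mulr1 -scalerAr eQ addrA (addrC (e * x)) -/Q -{1}[Q]scale1r.
  by rewrite -scalerDl addrC subrK.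
rewrite eQx xx scalerA -addrA -scalerDl mulrBl mulVf // mul1r.
by rewrite addrA subrK subrr scale0r addr0.
Qed.

Lemma mulr_quad_inv : x * quad_inv = 1.
Proof.
by rewrite mulrDr -scalerAr mulrDr -ex mulrA -ex -mulrA quad_inv_key.
Qed.

Lemma mul_quad_invr : quad_inv * x = 1.
Proof. by rewrite mulrDl -scalerAl mulrDl -mulrA quad_inv_key. Qed.

End QuadraticInverse.

Lemma natr_CC_neq0 (d : nat) : (0 < d)%N -> (d%:R : CC_fieldType) != 0.
Proof.
by move=> d_gt0; have : (d%:R : complex Rdefinitions.R) != 0 by rewrite pnatr_eq0 -lt0n.
Qed.

Section YokonumaHecke.
Variables (d n : nat) (u : CC_fieldType) (A : algType CC_fieldType) (g t : nat -> A).
Hypotheses (d_gt0 : (1 <= d)%N) (u_neq0 : u != 0) (YH : YH_relations d n u g t).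

Local Notation r := (YH_r d g t).

Let gg_far i j : (1 <= i <= n.-1)%N -> (1 <= j <= n.-1)%N ->
  (i.+1 < j)%N || (j.+1 < i)%N -> g i * g j = g j * g i.
Proof. by case: YH => far _; apply: far. Qed.
Let g_braid i : (1 <= i)%N -> (i.+1 <= n.-1)%N ->
  g i.+1 * g i * g i.+1 = g i * g i.+1 * g i.
Proof. by case: YH => _ [braid _]; apply: braid. Qed.
Let tt_comm i j : (1 <= i <= n)%N -> (1 <= j <= n)%N -> GRing.comm (t i) (t j).
Proof. by case: YH => _ [_ [comm _]]; apply: comm. Qed.
Let t_expd i : (1 <= i <= n)%N -> t i ^+ d = 1.
Proof. by case: YH => _ [_ [_ [expd _]]]; apply: expd. Qed.
Let gt_shift i : (1 <= i <= n.-1)%N -> g i * t i = t i.+1 * g i.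
Proof. by case: YH => _ [_ [_ [_ [shift _]]]]; apply: shift. Qed.
Let gt_unshift i : (1 <= i <= n.-1)%N -> g i * t i.+1 = t i * g i.
Proof. by case: YH => _ [_ [_ [_ [_ [unshift _]]]]]; apply: unshift. Qed.
Let gt_far i j : (1 <= i <= n.-1)%N -> (1 <= j <= n)%N -> j != i -> j != i.+1 ->
  g i * t j = t j * g i.
Proof. by case: YH => _ [_ [_ [_ [_ [_ [far _]]]]]]; apply: far. Qed.
Let g_quadratic i : (1 <= i <= n.-1)%N ->
  g i ^+ 2 = 1 + (u - 1) *: YH_e d t i + (u - 1) *: (YH_e d t i * g i).
Proof. by case: YH => _ [_ [_ [_ [_ [_ [_ quad]]]]]]; apply: quad. Qed.

Definition ginv k := quad_inv u (YH_e d t k) (g k).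

Lemma g_invertible k : (1 <= k <= n.-1)%N -> g k * ginv k = 1 /\ ginv k * g k = 1.
Proof.
move=> k_range; have d_neq0 := natr_CC_neq0 d_gt0.
have tt : GRing.comm (t k) (t k.+1) by apply: tt_comm; lia.
have tkd : t k ^+ d = 1 by apply: t_expd; lia.
have tk1d : t k.+1 ^+ d = 1 by apply: t_expd; lia.
have ee := eproj_idem d_neq0 tt tkd tk1d.
have eg := eproj_comm d_neq0 tt tkd tk1d (gt_shift k_range) (gt_unshift k_range).
by split; [apply: mulr_quad_inv | apply: mul_quad_invr]; rewrite // g_quadratic.
Qed.

Definition delta j := g j * g j.+1 * g j.+2.
Definition delta_inv j := ginv j.+2 * ginv j.+1 * ginv j.

Section Delta.
Variable j : nat.
Hypotheses (j_gt0 : (1 <= j)%N) (j_le : (j + 3 <= n)%N).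

Lemma delta_invertible : delta j * delta_inv j = 1 /\ delta_inv j * delta j = 1.
Proof.
have [g0 g0'] := g_invertible (k := j) ltac:(lia).
have [g1 g1'] := g_invertible (k := j.+1) ltac:(lia).
have [g2 g2'] := g_invertible (k := j.+2) ltac:(lia).
rewrite /delta /delta_inv -!mulrA; split.
  by rewrite (mulrA (g j.+2)) g2 mul1r (mulrA (g j.+1)) g1 mul1r.
by rewrite (mulrA (ginv j)) g0' mul1r (mulrA (ginv j.+1)) g1' mul1r.
Qed.

Lemma delta_g0 : intertwines (delta j) (g j) (g j.+1).
Proof.
rewrite /intertwines /delta -(mulrA _ (g j.+2)) (@gg_far j.+2 j); try lia.
by rewrite !mulrA -g_braid //; lia.
Qed.

Lemma delta_g1 : intertwines (delta j) (g j.+1) (g j.+2).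
Proof.
rewrite /intertwines /delta -!mulrA (mulrA (g j.+1)) -g_braid; try lia.
by rewrite !mulrA (@gg_far j j.+2) //; lia.
Qed.

Lemma delta_t m : (j <= m <= j.+2)%N -> intertwines (delta j) (t m) (t m.+1).
Proof.
move=> m_range; have [->|[->|->]] : m = j \/ m = j.+1 \/ m = j.+2 by lia.
all: apply: intertwines_comp; last apply: intertwines_comp.
all: first [apply: gt_shift; lia | apply: gt_far; lia].
Qed.

Lemma delta_r : intertwines (delta j) (r j) (r j.+1).
Proof.
apply: intertwines_sum => a; apply: intertwines_sum => b.
apply: intertwinesM; last first.
  rewrite /YH_gpar.
  by repeat first [ apply: intertwinesD | apply: intertwinesM | apply: intertwines1
                  | exact: delta_g0 | exact: delta_g1 ].
apply: intertwinesM; first apply: intertwinesM.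
all: by apply: intertwinesX; apply: delta_t; lia.
Qed.

Lemma r_succ_in_ideal : in_ideal [:: r j] (r j.+1).
Proof.
have [dd' _] := delta_invertible.
rewrite -[r j.+1]mulr1 -dd' mulrA -delta_r.
by apply/in_idealMlr/in_ideal_mem/mem_head.
Qed.

Lemma r_pred_in_ideal : in_ideal [:: r j.+1] (r j).
Proof.
have [_ d'd] := delta_invertible.
rewrite -[r j]mul1r -d'd -mulrA delta_r mulrA.
by apply/in_idealMlr/in_ideal_mem/mem_head.
Qed.

End Delta.

Lemma r_r1_same_ideal j : (1 <= j <= n - 2)%N ->
  in_ideal [:: r 1] (r j) /\ in_ideal [:: r j] (r 1).
Proof.
elim: j => [|[|j] IHj] j_range; first by [].
  by split; apply/in_ideal_mem/mem_head.
have [r1j rj1] := IHj ltac:(lia).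
split; first by apply: in_ideal1_trans r1j (r_succ_in_ideal _ _); lia.
by apply: in_ideal1_trans (r_pred_in_ideal _ _) rj1; lia.
Qed.

End YokonumaHecke.

Theorem theorem4 (d n : nat) (u : CC_fieldType) :
  (1 <= d)%N -> (3 <= n)%N -> u != 0 ->
  forall (A : algType CC_fieldType) (g t : nat -> A),
    YH_relations d n u g t ->
    forall i : nat, (1 <= i <= n - 2)%N ->
      forall x : A,
        in_ideal [seq YH_r d g t j | j <- iota 1 (n - 2)] x <->
        in_ideal [:: YH_r d g t i] x.
Proof.
move=> d_gt0 n_ge3 u_neq0 A g t YH i i_range x.
have r_gen j : (1 <= j <= n - 2)%N -> in_ideal [:: YH_r d g t i] (YH_r d g t j).
  move=> j_range; have [_ ri1] := r_r1_same_ideal d_gt0 u_neq0 YH i_range.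
  by have [r1j _] := r_r1_same_ideal d_gt0 u_neq0 YH j_range; apply: in_ideal1_trans r1j.
split; apply: in_ideal_trans => s.
  by move=> /mapP [j]; rewrite mem_iota => j_range ->; apply: r_gen; lia.
rewrite inE => /eqP ->; apply/in_ideal_mem/mapP; exists i => //.
by rewrite mem_iota; lia.
Qed.
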